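(* For any real number $s\ge 1$ that is not an integer, $$\sum_{i=0}^{\lfloor s\rfloor+1}\binom{s}{i}<2^s+\frac{1}{4(s+1)}.$$
   Context: For real $s$ and integer $i\ge0$, $\binom{s}{i}=\frac{s(s-1)\cdots(s-i+1)}{i!}$ (with $\binom{s}{0}=1$). *)

From Stdlib Require Import Reals Lra Lia ZArith.
Open Scope R_scope.

Fixpoint falling (s : R) (i : nat) : R :=
  match i with
  | O => 1
  | S j => falling s j * (s - INR j)
  end.

Definition gbinom (s : R) (i : nat) : R := falling s i / INR (fact i).

Fixpoint sum_upto (f : nat -> R) (n : nat) : R :=
  match n with
  | O => f O
  | S m => sum_upto f m + f (S m)
  end.

(* Let n = floor s and f = s - n, so 0 < f < 1.  The sum is T(1), where T is
   the Taylor polynomial of degree n + 1 of (1 + x)^s at 0.  For a <= k and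
   x >= 0 the remainder (1 + x)^a - T_k(x) lies between 0 and the next term
   binom(a, k) x^k: its derivative is a times the remainder for (a - 1, k - 1),
   so this follows by induction on k, comparing derivatives through the mean
   value theorem.  For a = s, k = n + 2, x = 1 the next term is
   binom(s, n + 2) = - binom(s, n) f (1 - f) / ((n + 1) (n + 2)) < 0, and
   binom(s, n) <= n + 1, f (1 - f) <= 1/4 bound its size by
   1 / (4 (n + 2)) < 1 / (4 (s + 1)). *)

From Stdlib Require Import Reals ZArith Lra Lia.
Open Scope R_scope.

Definition between0 (u v : R) : Prop := 0 <= u <= v \/ v <= u <= 0.

Lemma between0_scal (c u v : R) : between0 u v -> between0 (c * u) (c * v).
Proof.
  unfold between0; intros [[H1 H2] | [H1 H2]]; destruct (Rle_or_lt 0 c);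
    [left | right | right | left]; split; nra.
Qed.

Lemma between0_ge0 (u v : R) : 0 <= v -> between0 u v -> 0 <= u <= v.
Proof. unfold between0; lra. Qed.

Lemma between0_le0 (u v : R) : v <= 0 -> between0 u v -> v <= u <= 0.
Proof. unfold between0; lra. Qed.

Section Comparison.

Variables (f g f' g' : R -> R) (x : R).
Hypotheses (x_ge0 : 0 <= x) (f0 : f 0 = 0) (g0 : g 0 = 0).
Hypothesis f_deriv : forall c, 0 <= c <= x -> derivable_pt_lim f c (f' c).
Hypothesis g_deriv : forall c, 0 <= c <= x -> derivable_pt_lim g c (g' c).

Lemma ge0_le_of_derivative :
  (forall c, 0 <= c <= x -> 0 <= f' c <= g' c) -> 0 <= f x <= g x.
Proof.
  intros Hd.
  destruct (Req_dec x 0) as [-> | Hx]; [lra |].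
  assert (x_gt0 : 0 < x) by lra.
  assert (gf_deriv : forall c, 0 <= c <= x ->
    derivable_pt_lim (fun y => g y - f y) c (g' c - f' c)).
  { intros c Hc; apply (derivable_pt_lim_minus g f); auto. }
  destruct (MVT_cor2 f f' 0 x x_gt0 f_deriv) as [c1 [E1 Hc1]].
  destruct (MVT_cor2 _ _ 0 x x_gt0 gf_deriv) as [c2 [E2 Hc2]].
  specialize (Hd c1 ltac:(lra)) as Hd1; specialize (Hd c2 ltac:(lra)) as Hd2.
  rewrite f0, g0 in *; split; nra.
Qed.

End Comparison.

Lemma between0_of_derivative (f g f' g' : R -> R) (x : R) :
  0 <= x -> f 0 = 0 -> g 0 = 0 ->
  (forall c, 0 <= c <= x -> derivable_pt_lim f c (f' c)) ->
  (forall c, 0 <= c <= x -> derivable_pt_lim g c (g' c)) ->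
  (forall c, 0 <= c <= x -> 0 <= g' c) \/ (forall c, 0 <= c <= x -> g' c <= 0) ->
  (forall c, 0 <= c <= x -> between0 (f' c) (g' c)) -> between0 (f x) (g x).
Proof.
  intros x_ge0 f0 g0 f_deriv g_deriv [g'_ge0 | g'_le0] Hd.
  - left; apply (ge0_le_of_derivative f g f' g'); auto.
    intros c Hc; apply between0_ge0; auto.
  - right.
    assert (H : 0 <= - f x <= - g x).
    { apply (ge0_le_of_derivative (fun y => - f y) (fun y => - g y)
               (fun c => - f' c) (fun c => - g' c)); try lra.
      - intros c Hc; apply (derivable_pt_lim_opp f); auto.
      - intros c Hc; apply (derivable_pt_lim_opp g); auto.
      - intros c Hc; specialize (between0_le0 _ _ (g'_le0 c Hc) (Hd c Hc)); lra. }
    lra.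
Qed.

Lemma falling_S_shift (a : R) (i : nat) : falling a (S i) = a * falling (a - 1) i.
Proof.
  induction i as [| i IH].
  - simpl; ring.
  - change (falling a (S (S i))) with (falling a (S i) * (a - INR (S i))).
    rewrite IH; simpl falling; rewrite S_INR; ring.
Qed.

Lemma falling_pos_le (s t : R) (j : nat) : INR j <= s <= t -> 0 < falling s j <= falling t j.
Proof.
  induction j as [| j IH]; intros Hst; simpl; [lra |].
  rewrite S_INR in Hst.
  assert (0 <= INR j) by apply pos_INR.
  destruct IH; [lra |]; split; nra.
Qed.

Lemma falling_nat_succ (j : nat) : falling (INR j + 1) j = INR (fact (S j)).
Proof.
  induction j as [| j IH]; [simpl; ring |].
  rewrite falling_S_shift, S_INR, Rplus_minus_r, IH.
  change (fact (S (S j))) with (S (S j) * fact (S j))%nat.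
  rewrite mult_INR, !S_INR; ring.
Qed.

Lemma gbinom_absorption (a : R) (k : nat) :
  a * gbinom (a - 1) k = INR (S k) * gbinom a (S k).
Proof.
  unfold gbinom; rewrite falling_S_shift.
  change (fact (S k)) with (S k * fact k)%nat; rewrite mult_INR.
  field; split; [apply INR_fact_neq_0 | apply not_0_INR; lia].
Qed.

Fixpoint binom_taylor (a : R) (k : nat) (x : R) : R :=
  match k with
  | O => 0
  | S j => binom_taylor a j x + gbinom a j * x ^ j
  end.

Definition binom_taylor_rem (a : R) (k : nat) (x : R) : R :=
  Rpower (1 + x) a - binom_taylor a k x.

Lemma binom_taylor_0 (a : R) (k : nat) : binom_taylor a (S k) 0 = 1.
Proof.
  induction k as [| k IH].
  - simpl; unfold gbinom; simpl; field.
  - simpl binom_taylor in *; rewrite IH; simpl; ring.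
Qed.

Lemma binom_taylor_rem_0 (a : R) (k : nat) : binom_taylor_rem a (S k) 0 = 0.
Proof.
  unfold binom_taylor_rem, Rpower; rewrite binom_taylor_0, Rplus_0_r, ln_1, Rmult_0_r, exp_0; ring.
Qed.

Lemma sum_upto_gbinom (s : R) (n : nat) :
  sum_upto (gbinom s) n = binom_taylor s (S n) 1.
Proof.
  induction n as [| n IH]; simpl sum_upto.
  - simpl; ring.
  - rewrite IH; simpl binom_taylor; rewrite pow1; ring.
Qed.

Lemma derivable_pt_lim_binom_taylor (a : R) (k : nat) (t : R) :
  derivable_pt_lim (binom_taylor a (S k)) t (a * binom_taylor (a - 1) k t).
Proof.
  induction k as [| k IH].
  - apply derivable_pt_lim_ext with (fun _ => 1).
    + intros; simpl; unfold gbinom; simpl; field.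
    + rewrite Rmult_0_r; apply derivable_pt_lim_const.
  - replace (a * binom_taylor (a - 1) (S k) t) with
      (a * binom_taylor (a - 1) k t + gbinom a (S k) * (INR (S k) * t ^ pred (S k))).
    + apply (derivable_pt_lim_plus (binom_taylor a (S k)) (fun x => gbinom a (S k) * x ^ S k));
        [exact IH |].
      apply (derivable_pt_lim_scal (fun x => x ^ S k)), derivable_pt_lim_pow.
    + simpl binom_taylor at 2; simpl pred.
      rewrite <- Rmult_assoc, (Rmult_comm (gbinom a (S k))), <- gbinom_absorption; ring.
Qed.

Lemma derivable_pt_lim_Rpower_1_plus (a t : R) : -1 < t ->
  derivable_pt_lim (fun x => Rpower (1 + x) a) t (a * Rpower (1 + t) (a - 1)).
Proof.
  intros Ht.
  rewrite <- (Rmult_1_r (a * Rpower (1 + t) (a - 1))).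
  apply (derivable_pt_lim_comp (fun x => 1 + x) (fun y => Rpower y a)).
  - pose proof (derivable_pt_lim_plus _ _ t _ _
                  (derivable_pt_lim_const 1 t) (derivable_pt_lim_id t)) as D.
    rewrite Rplus_0_l in D; exact D.
  - apply derivable_pt_lim_power; lra.
Qed.

Lemma derivable_pt_lim_binom_taylor_rem (a : R) (k : nat) (t : R) : -1 < t ->
  derivable_pt_lim (binom_taylor_rem a (S k)) t (a * binom_taylor_rem (a - 1) k t).
Proof.
  intros Ht; unfold binom_taylor_rem; rewrite Rmult_minus_distr_l.
  apply (derivable_pt_lim_minus (fun x => Rpower (1 + x) a));
    [apply derivable_pt_lim_Rpower_1_plus; lra | apply derivable_pt_lim_binom_taylor].
Qed.

Lemma Rpower_1_plus_nonpos (a x : R) : a <= 0 -> 0 <= x -> 0 <= Rpower (1 + x) a <= 1.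
Proof.
  intros Ha Hx; split.
  - left; apply exp_pos.
  - rewrite <- (Rpower_O (1 + x)) at 2 by lra; apply Rle_Rpower; lra.
Qed.

Lemma binom_taylor_rem_between (k : nat) (a x : R) : a <= INR k -> 0 <= x ->
  between0 (binom_taylor_rem a k x) (gbinom a k * x ^ k).
Proof.
  revert a x; induction k as [| k IH]; intros a x Ha Hx.
  - left; unfold binom_taylor_rem, gbinom; simpl.
    replace (1 / 1 * 1) with 1 by field; rewrite Rminus_0_r.
    apply Rpower_1_plus_nonpos; auto.
  - set (G := gbinom a (S k)).
    apply (between0_of_derivative _ (fun y => G * y ^ S k)
             (fun c => a * binom_taylor_rem (a - 1) k c)
             (fun c => G * (INR (S k) * c ^ k))); auto.
    + apply binom_taylor_rem_0.
    + simpl; ring.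
    + intros c Hc; apply derivable_pt_lim_binom_taylor_rem; lra.
    + intros c Hc; apply (derivable_pt_lim_scal (fun y => y ^ S k)), derivable_pt_lim_pow.
    + assert (Hpos : forall c, 0 <= c -> 0 <= INR (S k) * c ^ k).
      { intros c Hc; apply Rmult_le_pos; [apply pos_INR | apply pow_le; auto]. }
      destruct (Rle_or_lt 0 G); [left | right]; intros c Hc;
        specialize (Hpos c ltac:(lra)); nra.
    + intros c Hc.
      assert (Ha1 : a - 1 <= INR k) by (rewrite S_INR in Ha; lra).
      replace (G * (INR (S k) * c ^ k)) with (a * (gbinom (a - 1) k * c ^ k))
        by (rewrite <- Rmult_assoc, gbinom_absorption; unfold G; ring).
      apply between0_scal, IH; lra.
Qed.

Lemma gbinom_pos_le (n : nat) (s : R) : INR n <= s <= INR n + 1 -> 0 < gbinom s n <= INR n + 1.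
Proof.
  intros Hs.
  assert (Hfact : 0 < INR (fact n)) by apply INR_fact_lt_0.
  destruct (falling_pos_le s (INR n + 1) n Hs) as [Hpos Hle].
  rewrite falling_nat_succ in Hle.
  change (fact (S n)) with (S n * fact n)%nat in Hle; rewrite mult_INR, S_INR in Hle.
  assert (E : falling s n = gbinom s n * INR (fact n))
    by (unfold gbinom; field; apply INR_fact_neq_0).
  rewrite E in Hpos, Hle; split; nra.
Qed.

Lemma gbinom_SS (s : R) (n : nat) : gbinom s (S (S n)) * ((INR n + 1) * (INR n + 2)) =
  - (gbinom s n * (s - INR n) * (1 - (s - INR n))).
Proof.
  unfold gbinom.
  change (falling s (S (S n))) with (falling s n * (s - INR n) * (s - INR (S n))).
  change (fact (S (S n))) with (S (S n) * (S n * fact n))%nat.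
  rewrite !mult_INR, !S_INR.
  assert (0 <= INR n) by apply pos_INR.
  field; split; [apply INR_fact_neq_0 | lra].
Qed.

Lemma gbinom_SS_bounds (n : nat) (s : R) : INR n < s < INR n + 1 ->
  - (1 / (4 * (INR n + 2))) <= gbinom s (S (S n)) <= 0.
Proof.
  intros Hs.
  pose proof (gbinom_SS s n) as E.
  destruct (gbinom_pos_le n s ltac:(lra)) as [Hb0 Hb1].
  assert (0 <= INR n) by apply pos_INR.
  set (b := gbinom s n) in *; set (f := s - INR n) in *; set (g := gbinom s (S (S n))) in *.
  assert (Hf : 0 < f < 1) by (unfold f; lra).
  assert (Hamgm : 0 <= f * (1 - f) <= 1 / 4)
    by (pose proof (pow2_ge_0 (f - 1 / 2)); split; nra).
  assert (Hq : 0 <= b * f * (1 - f) <= (INR n + 1) / 4)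
    by (rewrite Rmult_assoc; split; nra).
  assert (Hg : -1 <= 4 * (INR n + 2) * g <= 0) by nra.
  assert (Hinv : 1 / (4 * (INR n + 2)) * (4 * (INR n + 2)) = 1) by (field; lra).
  assert (0 < 1 / (4 * (INR n + 2))) by (apply Rdiv_lt_0_compat; lra).
  split; nra.
Qed.

Lemma Int_part_nat_bounds (s : R) : 0 <= s -> (forall n : Z, s <> IZR n) ->
  INR (Z.to_nat (Int_part s)) < s < INR (Z.to_nat (Int_part s)) + 1.
Proof.
  intros Hs Hnint.
  destruct (base_Int_part s) as [Hlo Hhi].
  assert (Hz : (0 <= Int_part s)%Z)
    by (assert (Hgt : (-1 < Int_part s)%Z) by (apply lt_IZR; lra); lia).
  rewrite INR_IZR_INZ, Z2Nat.id by exact Hz.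
  specialize (Hnint (Int_part s)); split; lra.
Qed.

Theorem lemma2p2 (s : R) (hs : 1 <= s) (hnint : forall n : Z, s <> IZR n) :
  sum_upto (gbinom s) (S (Z.to_nat (Int_part s)))
    < Rpower 2 s + 1 / (4 * (s + 1)).
Proof.
  destruct (Int_part_nat_bounds s ltac:(lra) hnint) as [Hlo Hhi].
  set (n := Z.to_nat (Int_part s)) in *.
  rewrite sum_upto_gbinom.
  assert (Hrem := binom_taylor_rem_between (S (S n)) s 1 ltac:(rewrite !S_INR; lra) ltac:(lra)).
  destruct (gbinom_SS_bounds n s (conj Hlo Hhi)) as [Hgl Hgu].
  rewrite pow1, Rmult_1_r in Hrem.
  apply between0_le0 in Hrem; [| exact Hgu].
  unfold binom_taylor_rem in Hrem; replace (1 + 1) with 2 in Hrem by ring.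
  assert (1 / (4 * (INR n + 2)) < 1 / (4 * (s + 1))).
  { apply Rmult_lt_compat_l; [lra |]. apply Rinv_lt_contravar; nra. }
  lra.
Qed.
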